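(* Every almost bipartite cubic graph is $3$-edge-colourable.
   Context: A cubic graph $G$ (multiple edges and loops permitted) is almost bipartite if it is bridgeless, not bipartite, and contains two edges $e$ and $f$ such that $G-\{e,f\}$ is bipartite. A $3$-edge-colouring is a proper edge colouring with three colours. *)

From mathcomp Require Import all_boot.
Set Implicit Arguments. Unset Strict Implicit. Unset Printing Implicit Defensive.

(* A multigraph is given by a finite vertex type V, a finite edge type E and
   an endpoint map ends : E -> V * V (the order of the pair is irrelevant;
   a loop is an edge e with (ends e).1 = (ends e).2). *)
Section MultiGraph.
Variables (V E : finType) (ends : E -> V * V).

Definition incident (e : E) (v : V) : bool :=
  ((ends e).1 == v) || ((ends e).2 == v).

Definition is_loop (e : E) : bool := (ends e).1 == (ends e).2.

(* degree, loops counted twice *)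
Definition degree (v : V) : nat :=
  #|[set e | (ends e).1 == v]| + #|[set e | (ends e).2 == v]|.

Definition cubic : Prop := forall v, degree v = 3.

Definition adj_minus (F : {set E}) : rel V :=
  fun u v => [exists e, (e \notin F) &&
                 ((ends e == (u, v)) || (ends e == (v, u)))].

Definition bridge (e : E) : Prop :=
  exists u v, connect (adj_minus set0) u v /\ ~~ connect (adj_minus [set e]) u v.

Definition bridgeless : Prop := forall e, ~ bridge e.

Definition bipartite_minus (F : {set E}) : Prop :=
  exists c : V -> bool, forall e, e \notin F -> c (ends e).1 != c (ends e).2.

Definition bipartite : Prop := bipartite_minus set0.

Definition almost_bipartite : Prop :=
  [/\ bridgeless, ~ bipartite &
      exists e f : E, e != f /\ bipartite_minus [set e; f]].

Definition proper_edge_colouring (k : nat) (col : E -> 'I_k) : Prop :=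
  (forall e, ~~ is_loop e) /\
  (forall e f v, e != f -> incident e v -> incident f v -> col e != col f).

Definition three_edge_colourable : Prop :=
  exists col : E -> 'I_3, proper_edge_colouring col.

End MultiGraph.

From mathcomp Require Import all_boot zify.
Set Implicit Arguments. Unset Strict Implicit. Unset Printing Implicit Defensive.

(* Let c 2-colour G - {e, f} with classes A and B.  Counting edge ends gives
   3 |A| - 3 |B| = 2 (k - 2), where k is the number of ends of e and f in A;
   hence k = 2 and, G not being bipartite, e lies inside A and f inside B.
   Bridgelessness yields Hall's condition for G - {e, f} between A and B minus
   the ends of e and f, so some perfect matching M of G contains e and f.
   Then G - M is 2-regular and bipartite, so by Hall again it is the union of
   two perfect matchings, which together with M are the three colour classes. *)

Section Hall.
Variables (A B : finType) (b0 : B).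
Implicit Types (r : A -> B -> bool) (S SA : {set A}) (T : {set B}) (f : A -> B).

Definition nbhd r S : {set B} := [set b | [exists a in S, r a b]].

Definition hall_condition r SA := forall S, S \subset SA -> #|S| <= #|nbhd r S|.

Definition sdr r SA f := {in SA &, injective f} /\ {in SA, forall a, r a (f a)}.

Definition rel_avoid r T a b := r a b && (b \notin T).

Lemma nbhdU r S1 S2 : nbhd r (S1 :|: S2) = nbhd r S1 :|: nbhd r S2.
Proof.
apply/setP => b; rewrite !inE; apply/existsP/orP.
- by case=> a /andP[]; rewrite inE => /orP[] Sa rab; [left|right];
    apply/existsP; exists a; rewrite Sa.
- by case=> /existsP[a /andP[Sa rab]]; exists a; rewrite inE Sa ?orbT.
Qed.

Lemma nbhd_avoid r T S : nbhd (rel_avoid r T) S = nbhd r S :\: T.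
Proof.
apply/setP => b; rewrite !inE; apply/existsP/andP.
- by case=> a /and3P[Sa rab Tb]; split=> //; apply/existsP; exists a; rewrite Sa.
- by case=> Tb /existsP[a /andP[Sa rab]]; exists a; rewrite Sa /rel_avoid rab Tb.
Qed.

Lemma sdr_glue r S1 S2 T f1 f2 :
  sdr r S1 f1 -> {in S1, forall a, f1 a \in T} -> sdr (rel_avoid r T) S2 f2 ->
  sdr r (S1 :|: S2) (fun a => if a \in S1 then f1 a else f2 a).
Proof.
move=> [inj1 r1] f1T [inj2 r2].
have S2_of a : a \in S1 :|: S2 -> a \notin S1 -> a \in S2.
  by rewrite inE => /orP[->|].
have f2T a : a \in S2 -> f2 a \notin T by move/r2/andP=> [].
split=> [a a' Sa Sa'|a Sa].
- case: ifP => a1; case: ifP => a'1.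
  + exact: inj1.
  + by move=> Ef; have := f2T _ (S2_of _ Sa' (negbT a'1)); rewrite -Ef f1T.
  + by move=> Ef; have := f2T _ (S2_of _ Sa (negbT a1)); rewrite Ef f1T.
  + by apply: inj2; apply: S2_of; rewrite ?a1 ?a'1.
- case: ifP => a1; first exact: r1.
  by have /andP[] := r2 _ (S2_of _ Sa (negbT a1)).
Qed.

Section HallStep.
Variables (r : A -> B -> bool) (SA : {set A}).
Hypothesis hallSA : hall_condition r SA.
Hypothesis IH : forall r' SA', #|SA'| < #|SA| -> hall_condition r' SA' ->
  exists f, sdr r' SA' f.

Lemma sdr_of_critical S :
  S != set0 -> S \proper SA -> #|nbhd r S| <= #|S| -> exists f, sdr r SA f.
Proof.
move=> S0 ltS critS; have sS := proper_sub ltS.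
have [f1 sdr1] : exists f, sdr r S f.
  apply: IH; first exact: proper_card.
  by move=> S' sS'; apply: hallSA; apply: subset_trans sS.
have [f2 sdr2] : exists f, sdr (rel_avoid r (nbhd r S)) (SA :\: S) f.
  apply: IH.
    have := cardsID S SA; rewrite (setIidPr sS) -card_gt0 in S0 *; lia.
  move=> S' sS'; rewrite nbhd_avoid.
  have disjS : S' :&: S = set0.
    apply/setP => a; rewrite !inE; apply/negbTE/andP => -[/(subsetP sS')].
    by rewrite inE => /andP[/negP].
  have /hallSA : S' :|: S \subset SA.
    by rewrite subUset sS (subset_trans sS') ?subsetDl.
  rewrite nbhdU cardsU disjS cards0 subn0.
  have := cardsID (nbhd r S) (nbhd r S'); have := hallSA sS.
  have := subset_leq_card (subsetIr (nbhd r S') (nbhd r S)).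
  rewrite cardsU; lia.
have f1N : {in S, forall a, f1 a \in nbhd r S}.
  by move=> a Sa; rewrite inE; apply/existsP; exists a; rewrite Sa (proj2 sdr1).
by have := sdr_glue sdr1 f1N sdr2; rewrite -{1}(setIidPr sS) setID; exact: ex_intro.
Qed.

Lemma sdr_of_surplus :
  (forall S, S != set0 -> S \proper SA -> #|S| < #|nbhd r S|) ->
  exists f, sdr r SA f.
Proof.
move=> surplus; have [->|[a0 SAa0]] := set_0Vmem SA.
  by exists (fun=> b0); split=> a; rewrite inE.
have [b1] : exists b1, b1 \in nbhd r [set a0].
  apply/set0Pn; rewrite -card_gt0; apply: leq_trans (hallSA _).
    by rewrite cards1.
  by rewrite sub1set.
rewrite inE => /existsP[a /andP[/set1P-> ra0b1]].
have [f2 sdr2] : exists f, sdr (rel_avoid r [set b1]) (SA :\ a0) f.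
  apply: IH; first by rewrite (cardsD1 a0 SA) SAa0.
  move=> S sS; have [->|S0] := eqVneq S set0; first by rewrite cards0.
  have := surplus S S0 (sub_proper_trans sS (properD1 SAa0)).
  rewrite nbhd_avoid; have := cardsID [set b1] (nbhd r S).
  have := subset_leq_card (subsetIr (nbhd r S) [set b1]); rewrite cards1; lia.
have sdr1 : sdr r [set a0] (fun=> b1).
  by split=> [x y /set1P-> /set1P->|x /set1P->].
have f1b1 : {in [set a0], forall x, b1 \in [set b1]} by move=> x _; rewrite inE.
by have := sdr_glue sdr1 f1b1 sdr2; rewrite setD1K //; exact: ex_intro.
Qed.

End HallStep.

Theorem hall_sdr r SA : hall_condition r SA -> exists f, sdr r SA f.
Proof.
have [n] := ubnP #|SA|; elim: n r SA => // n IHn r SA ltSA hallSA.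
have IH r' SA' : #|SA'| < #|SA| -> hall_condition r' SA' -> exists f, sdr r' SA' f.
  by move=> lt; apply: IHn; apply: leq_trans lt ltSA.
case: (boolP [exists S : {set A}, [&& S != set0, S \proper SA & #|nbhd r S| <= #|S|]]).
  by case/existsP=> S /and3P[]; apply: (sdr_of_critical hallSA IH).
move/existsPn=> surplus; apply: sdr_of_surplus hallSA IH _ => S S0 ltS.
by have := surplus S; rewrite S0 ltS /= -ltnNge.
Qed.

End Hall.

Lemma sum_nat_of_bool (T : finType) (P : pred T) :
  \sum_x (P x : nat) = #|[set x | P x]|.
Proof. by rewrite -sum1dep_card [RHS]big_mkcond; apply: eq_bigr => x _; case: (P x). Qed.

Lemma sum_nat_of_bool_cond (T : finType) (P Q : pred T) :
  \sum_(x | P x) (Q x : nat) = #|[set x | P x && Q x]|.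
Proof. by rewrite big_mkcond -sum_nat_of_bool; apply: eq_bigr => x _; case: (P x). Qed.

Lemma card_preimset_sum (T U : finType) (D : {set T}) (p : T -> U) (X : {set U}) :
  #|[set x in D | p x \in X]| = \sum_(u in X) #|[set x in D | p x == u]|.
Proof.
rewrite -sum1dep_card (partition_big p (mem X)) => [|x /andP[] //].
apply: eq_bigr => u Xu; rewrite sum1dep_card; apply: eq_card => x; rewrite !inE.
by case: eqP => [->|]; rewrite ?andbF // (Xu : u \in X) andbT.
Qed.

Lemma card_bij_fibre (T : finType) (SA SB : {set T}) (f : T -> T) v :
  {in SA &, injective f} -> f @: SA = SB -> [disjoint SA & SB] ->
  #|[set a in SA | (a == v) || (f a == v)]| = (v \in SA :|: SB).
Proof.
move=> finj fSA disAB.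
have fSB a : a \in SA -> f a \in SB by rewrite -fSA; apply: imset_f.
rewrite inE; case: (boolP (v \in SA)) => [SAv|nSAv] /=.
  rewrite (_ : [set a in SA | _] = [set v]) ?cards1 //; apply/setP => a.
  rewrite !inE; case: eqP => [->|_]; first by rewrite SAv.
  by apply/andP => -[/fSB fa /eqP fav]; rewrite fav (disjointFr disAB SAv) in fa.
case: (boolP (v \in SB)) => [SBv|nSBv].
  have /imsetP[a0 SAa0 Ev] : v \in f @: SA by rewrite fSA.
  subst v.
  rewrite (_ : [set a in SA | _] = [set a0]) ?cards1 //; apply/setP => a.
  rewrite !inE; apply/andP/eqP => [[SAa /orP[/eqP av|/eqP /finj]]|->].
  - by rewrite -av SAa in nSAv.
  - exact.
  - by rewrite SAa0 eqxx orbT.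
rewrite (_ : [set a in SA | _] = set0) ?cards0 //; apply/setP => a; rewrite !inE.
apply/negbTE/andP => -[SAa /orP[/eqP av|/eqP fav]].
- by rewrite -av SAa in nSAv.
- by rewrite -fav fSB in nSBv.
Qed.

Section Multigraph.
Variables (V E : finType) (ends : E -> V * V).
Implicit Types (X : {set V}) (H M N : {set E}).

Definition ends_in X g : nat := ((ends g).1 \in X) + ((ends g).2 \in X).

Definition crossing X g : bool := ((ends g).1 \in X) != ((ends g).2 \in X).

Definition perfect_matching M := forall v, #|[set g in M | incident ends g v]| = 1.

Definition edge_rel H (src tgt : E -> V) a b :=
  [exists g in H, (src g == a) && (tgt g == b)].

Lemma sum_ends_in_cubic X : cubic ends -> \sum_g ends_in X g = 3 * #|X|.
Proof.
move=> cub; rewrite -[RHS]mulnC -sum_nat_const -(eq_bigr _ (fun v _ => cub v)).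
rewrite (eq_bigr (fun v => #|[set g in setT | (ends g).1 == v]| +
                          #|[set g in setT | (ends g).2 == v]|)) => [|v _]; last first.
  by rewrite /degree; congr (_ + _); apply: eq_card => g; rewrite !inE.
rewrite [RHS]big_split /= -(card_preimset_sum _ (fun g => (ends g).1)).
rewrite -(card_preimset_sum _ (fun g => (ends g).2)) big_split /= !sum_nat_of_bool.
by congr (_ + _); apply: eq_card => g; rewrite !inE.
Qed.

Lemma cut1_not_bridgeless X : #|[set g | crossing X g]| = 1 -> ~ bridgeless ends.
Proof.
move/eqP/cards1P=> -[h cross_h] bl; apply: (bl h).
have other_g g : g != h -> ((ends g).1 \in X) = ((ends g).2 \in X).
  move=> ngh; have : g \notin [set x | crossing X x] by rewrite cross_h inE.
  by rewrite inE negbK => /eqP.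
exists (ends h).1, (ends h).2; split.
  apply: connect1; apply/existsP; exists h.
  by rewrite inE /= -surjective_pairing eqxx.
have closedX : closed (adj_minus ends [set h]) X.
  move=> x y /existsP[g /andP[]]; rewrite inE => /other_g Eg /orP[] /eqP Eends;
    by move: Eg; rewrite Eends => ->.
apply/negP => /(closed_connect closedX) Eh.
by have := set11 h; rewrite -cross_h inE /crossing Eh eqxx.
Qed.

Lemma sum_ends_in_crossing X :
  \sum_g ends_in X g = #|[set g | crossing X g]| +
                       2 * #|[set g | ((ends g).1 \in X) && ((ends g).2 \in X)]|.
Proof.
rewrite -!sum_nat_of_bool big_distrr -big_split; apply: eq_bigr => g _.
by rewrite /ends_in /crossing; case: (_ \in X); case: (_ \in X).
Qed.

Lemma loopless_of_bridgeless :
  cubic ends -> bridgeless ends -> forall g, ~~ is_loop ends g.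
Proof.
move=> cub bl g; apply/negP => /eqP loop_g.
apply: (@cut1_not_bridgeless [set (ends g).1]) bl.
have := sum_ends_in_crossing [set (ends g).1]; rewrite sum_ends_in_cubic // cards1.
have : 0 < #|[set x | ((ends x).1 \in [set (ends g).1]) &&
                      ((ends x).2 \in [set (ends g).1])]|.
  by apply/card_gt0P; exists g; rewrite !inE -loop_g eqxx.
lia.
Qed.

Section Loopless.
Hypotheses (cub : cubic ends) (no_loop : forall g, ~~ is_loop ends g).

Lemma card_incident v : #|[set g | incident ends g v]| = 3.
Proof.
rewrite -(cub v) /degree -cardsUI.
have -> : [set g | (ends g).1 == v] :&: [set g | (ends g).2 == v] = set0.
  apply/setP => g; rewrite !inE; apply/negbTE; apply: contra (no_loop g).
  by rewrite /is_loop; case/andP=> /eqP-> /eqP->.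
by rewrite cards0 addn0; apply: eq_card => g; rewrite !inE.
Qed.

Lemma card_incident_compl M v : perfect_matching M ->
  #|[set g in ~: M | incident ends g v]| = 2.
Proof.
move=> pmM; have := cardsID M [set g | incident ends g v]; rewrite card_incident.
have -> : [set g | incident ends g v] :&: M = [set g in M | incident ends g v].
  by apply/setP => g; rewrite !inE andbC.
have -> : [set g | incident ends g v] :\: M = [set g in ~: M | incident ends g v].
  by apply/setP => g; rewrite !inE andbC.
by rewrite pmM; lia.
Qed.

Lemma colourable_of_matchings M N :
  perfect_matching M -> perfect_matching N -> N \subset ~: M ->
  three_edge_colourable ends.
Proof.
move=> pmM pmN sNM.
have pm_rest v : #|[set g in ~: (M :|: N) | incident ends g v]| = 1.
  have := cardsID N [set g in ~: M | incident ends g v].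
  have -> : [set g in ~: M | incident ends g v] :&: N = [set g in N | incident ends g v].
    apply/setP => g; rewrite !inE; case gN: (g \in N); rewrite ?andbF //=.
    by move/subsetP: sNM => /(_ g gN); rewrite inE andbT => ->.
  have -> : [set g in ~: M | incident ends g v] :\: N =
            [set g in ~: (M :|: N) | incident ends g v].
    by apply/setP => g; rewrite !inE negb_or; case: (g \in N); rewrite ?andbF ?andbT.
  by rewrite (pmN v) (card_incident_compl v pmM); lia.
pose col g : 'I_3 :=
  if g \in M then ord0 else if g \in N then Ordinal (isT : 1 < 3) else ord_max.
exists col; split=> // g h v ngh gv hv.
have distinct (K : {set E}) :
    #|[set x in K | incident ends x v]| = 1 -> g \in K -> h \in K -> False.
  move/eqP; rewrite eqn_leq => /andP[/card_le1_eqP uK _] gK hK.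
  by apply: (negP ngh); apply/eqP; apply: (uK h g); rewrite inE ?gK ?hK.
rewrite /col; case gM: (g \in M); case hM: (h \in M);
  case gN: (g \in N); case hN: (h \in N) => //.
all: exfalso; first [ by apply: (distinct M (pmM v))
                    | by apply: (distinct N (pmN v))
                    | apply: (distinct _ (pm_rest v)) ].
all: by rewrite !inE negb_or ?gM ?hM ?gN ?hN.
Qed.

End Loopless.

Lemma edge_choice H (src tgt : E -> V) (SA : {set V}) (f : V -> V) (e0 : E) :
  {in SA, forall a, edge_rel H src tgt a (f a)} ->
  exists m : V -> E,
    {in SA, forall a, [/\ m a \in H, src (m a) = a & tgt (m a) = f a]}.
Proof.
move=> fH; exists (fun a => odflt e0 [pick g in H | (src g == a) && (tgt g == f a)]).
move=> a SAa; case: pickP => [g /and3P[gH /eqP-> /eqP->] // | none].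
by have /existsP[g /andP[gH gaf]] := fH a SAa; have := none g; rewrite /= gH gaf.
Qed.

Lemma matching_of_hall H (src tgt : E -> V) (SA SB : {set V}) :
  (forall g v, g \in H -> incident ends g v = (src g == v) || (tgt g == v)) ->
  {in H, forall g, tgt g \in SB} -> [disjoint SA & SB] -> #|SA| = #|SB| ->
  hall_condition (edge_rel H src tgt) SA ->
  exists2 N : {set E}, N \subset H &
    forall v, #|[set g in N | incident ends g v]| = (v \in SA :|: SB).
Proof.
move=> incH tgtH disAB cardAB hallA.
have [SA0|[a0 SAa0]] := set_0Vmem SA.
  have SB0 : SB = set0 by apply/cards0_eq; rewrite -cardAB SA0 cards0.
  exists set0 => [|v]; first exact: sub0set.
  rewrite SA0 SB0 setU0 inE; apply/eqP; rewrite cards_eq0; apply/eqP/setP => g.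
  by rewrite !inE.
have [f [finj frel]] := hall_sdr a0 hallA.
have [e0 _] : exists e0, e0 \in H.
  by have /existsP[g /andP[gH _]] := frel a0 SAa0; exists g.
have [m mP] := edge_choice e0 frel.
have fSB : f @: SA = SB.
  apply/eqP; rewrite eqEcard card_in_imset // -cardAB leqnn andbT.
  by apply/subsetP => b /imsetP[a SAa ->]; have [mH _ <-] := mP a SAa; apply: tgtH.
exists (m @: SA) => [|v].
  by apply/subsetP => g /imsetP[a SAa ->]; have [] := mP a SAa.
rewrite -(card_bij_fibre v finj fSB disAB) -(card_in_imset (f := m)); last first.
  move=> a a' /setIdP[SAa _] /setIdP[SAa' _] ema.
  by have [_ <- _] := mP a SAa; have [_ <- _] := mP a' SAa'; rewrite ema.
apply: eq_card => g; rewrite inE; apply/andP/imsetP.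
- case=> /imsetP[a SAa ->]; have [mH ma mf] := mP a SAa.
  by rewrite incH // ma mf => av; exists a; rewrite ?inE ?SAa.
- case=> a /setIdP[SAa av] ->; have [mH ma mf] := mP a SAa.
  by rewrite incH // ma mf; split; first exact: imset_f.
Qed.

Lemma regular_hall_condition H (src tgt : E -> V) (SA : {set V}) k : 0 < k ->
  {in SA, forall a, k <= #|[set g in H | src g == a]|} ->
  (forall b, #|[set g in H | tgt g == b]| <= k) ->
  hall_condition (edge_rel H src tgt) SA.
Proof.
move=> k_gt0 srcK tgtK S sS; rewrite -(leq_pmul2l k_gt0).
set NS := nbhd _ S.
apply: (@leq_trans #|[set g in H | src g \in S]|).
  rewrite card_preimset_sum mulnC -sum_nat_const; apply: leq_sum => a Sa.
  exact/srcK/(subsetP sS).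
apply: (@leq_trans #|[set g in H | tgt g \in NS]|).
  apply/subset_leq_card/subsetP => g; rewrite !inE => /andP[gH Sg].
  rewrite gH; apply/existsP; exists (src g); rewrite Sg; apply/existsP; exists g.
  by rewrite gH !eqxx.
by rewrite card_preimset_sum mulnC -sum_nat_const; apply: leq_sum.
Qed.

End Multigraph.

Section TwoColouring.
Variables (V E : finType) (ends : E -> V * V) (e f : E) (c : V -> bool).
Hypotheses (cub : cubic ends) (nef : e != f).
Hypothesis bip : forall g, g \notin [set e; f] -> c (ends g).1 != c (ends g).2.

Local Notation A := [set v | c v].
Local Notation B := [set v | ~~ c v].

Lemma sum_ends_in_split (X : {set V}) : 3 * #|X| =
  ends_in ends X e + ends_in ends X f + \sum_(g | g \notin [set e; f]) ends_in ends X g.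
Proof.
rewrite -(sum_ends_in_cubic X cub) (bigD1 e) // (bigD1 f) 1?eq_sym //= addnA.
by congr (_ + _); apply: eq_bigl => g; rewrite !inE negb_or andbC.
Qed.

Lemma ends_in_balance :
  3 * #|A| + ends_in ends B e + ends_in ends B f =
  3 * #|B| + ends_in ends A e + ends_in ends A f.
Proof.
rewrite !sum_ends_in_split.
rewrite (eq_bigr (ends_in ends B)) => [|g /bip]; first lia.
by rewrite /ends_in !inE; case: (c _); case: (c _).
Qed.

Lemma monochromatic_ef : ~ bipartite ends ->
  [&& c (ends e).1, c (ends e).2, ~~ c (ends f).1 & ~~ c (ends f).2] ||
  [&& ~~ c (ends e).1, ~~ c (ends e).2, c (ends f).1 & c (ends f).2].
Proof.
move=> nbip; case: (boolP ((c (ends e).1 != c (ends e).2) &&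
                           (c (ends f).1 != c (ends f).2))) => [/andP[bip_e bip_f]|].
  case: nbip; exists c => g _; case: (boolP (g \in [set e; f])) => [|/bip//].
  by rewrite !inE => /orP[] /eqP->.
have := ends_in_balance; rewrite /ends_in !inE.
by case: (c (ends e).1); case: (c (ends e).2); case: (c (ends f).1);
   case: (c (ends f).2) => //= balance _; lia.
Qed.

Section Oriented.
Hypothesis bl : bridgeless ends.
Hypotheses (ce1 : c (ends e).1) (ce2 : c (ends e).2).
Hypotheses (cf1 : ~~ c (ends f).1) (cf2 : ~~ c (ends f).2).

Local Notation Pa := [set (ends e).1; (ends e).2].
Local Notation Pb := [set (ends f).1; (ends f).2].
Local Notation A' := (A :\: Pa).
Local Notation B' := (B :\: Pb).

Definition aend g := if c (ends g).1 then (ends g).1 else (ends g).2.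
Definition bend g := if c (ends g).1 then (ends g).2 else (ends g).1.

Lemma no_loop : forall g, ~~ is_loop ends g.
Proof. exact: loopless_of_bridgeless. Qed.

Lemma incident_aend_bend g v : incident ends g v = (aend g == v) || (bend g == v).
Proof. by rewrite /incident /aend /bend; case: (c _); rewrite // orbC. Qed.

Lemma ends_in_aend_bend X g : ends_in ends X g = (aend g \in X) + (bend g \in X).
Proof. by rewrite /ends_in /aend /bend; case: (c _); rewrite // addnC. Qed.

Lemma crossing_aend_bend (X : {set V}) g :
  crossing ends X g = ((aend g \in X) != (bend g \in X)).
Proof. by rewrite /crossing /aend /bend; case: (c _); rewrite // eq_sym. Qed.

Lemma c_aend_bend g : g \notin [set e; f] -> c (aend g) && ~~ c (bend g).
Proof.
by move/bip; rewrite /aend /bend; case E1: (c _); rewrite /= ?E1; case: (c _).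
Qed.

Lemma card_sides : #|A| = #|B|.
Proof.
have := ends_in_balance; rewrite /ends_in !inE ce1 ce2 (negbTE cf1) (negbTE cf2).
lia.
Qed.

Lemma card_sides' : #|A'| = #|B'|.
Proof.
have [sPa sPb] : Pa \subset A /\ Pb \subset B.
  by split; apply/subsetP => v; rewrite !inE => /orP[] /eqP->.
rewrite !cardsD (setIidPr sPa) (setIidPr sPb) !cards2 card_sides.
by have := no_loop e; have := no_loop f; rewrite /is_loop => -> ->.
Qed.

Lemma card_incident_ef v :
  #|[set g in [set e; f] | incident ends g v]| = (v \in Pa) + (v \in Pb).
Proof.
rewrite -sum_nat_of_bool_cond big_setU1 ?inE //= big_set1.
by rewrite /incident !(eq_sym v).
Qed.

Lemma sum_aend_in_sub (S : {set V}) : S \subset A' ->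
  3 * #|S| = \sum_(g | g \notin [set e; f]) (aend g \in S).
Proof.
move=> sS; have notS v : (v \in Pa) || ~~ c v -> (v \in S) = false.
  move=> outA'; apply/negbTE/negP => /(subsetP sS); rewrite !inE.
  by case/andP=> /negbTE nPa cv; move: outA'; rewrite !inE in nPa *; rewrite nPa cv.
rewrite sum_ends_in_split [ends_in _ _ e]/ends_in [ends_in _ _ f]/ends_in.
rewrite !notS ?cf1 ?cf2 ?inE ?eqxx ?orbT // !add0n.
apply: eq_bigr => g /c_aend_bend /andP[_ cb].
by rewrite ends_in_aend_bend (notS (bend g)) ?cb ?orbT // addn0.
Qed.

Lemma sum_bend_in_sup (Y : {set V}) : Pb \subset Y -> Y \subset B ->
  3 * #|Y| = 2 + \sum_(g | g \notin [set e; f]) (bend g \in Y).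
Proof.
move=> sPb sY; have notY v : c v -> (v \in Y) = false.
  by move=> cv; apply/negbTE/negP => /(subsetP sY); rewrite inE cv.
have inY v : v \in Pb -> v \in Y by move/(subsetP sPb).
rewrite sum_ends_in_split [ends_in _ _ e]/ends_in [ends_in _ _ f]/ends_in.
rewrite (notY _ ce1) (notY _ ce2) (inY _ (set21 _ _)) (inY _ (set22 _ _)).
congr (_ + _); apply: eq_bigr => g /c_aend_bend /andP[ca _].
by rewrite ends_in_aend_bend (notY _ ca).
Qed.

Lemma crossing_cut (S Y : {set V}) : S \subset A' -> Pb \subset Y -> Y \subset B ->
  (forall g, g \notin [set e; f] -> aend g \in S -> bend g \in Y) ->
  [set g | crossing ends (S :|: Y) g] =
  [set g | [&& g \notin [set e; f], bend g \in Y & aend g \notin S]].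
Proof.
move=> sS sPb sY SY; apply/setP => g.
have notS v : ~~ c v -> (v \in S) = false.
  by move=> ncv; apply/negbTE/negP => /(subsetP sS); rewrite !inE (negbTE ncv) andbF.
have notY v : c v -> (v \in Y) = false.
  by move=> cv; apply/negbTE/negP => /(subsetP sY); rewrite inE cv.
have notSPa v : v \in Pa -> (v \in S) = false.
  by move=> Pav; apply/negbTE/negP => /(subsetP sS); rewrite in_setD Pav.
have inY v : v \in Pb -> v \in Y by move/(subsetP sPb).
case: (boolP (g \in [set e; f])) => [|gef].
  rewrite !inE => /orP[] /eqP->; rewrite eqxx ?orbT /= /crossing !inE.
    by rewrite !notSPa ?set21 ?set22 // (notY _ ce1) (notY _ ce2).
  by rewrite !inY ?set21 ?set22 ?orbT.
have /andP[ca cb] := c_aend_bend gef.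
rewrite 2!in_set gef crossing_aend_bend !inE (notY _ ca) (notS _ cb) orbF /=.
by case: (boolP (aend g \in S)) => [/(SY g gef)->|_]; rewrite ?andbT //; case: (_ \in Y).
Qed.

Local Notation edges_to_B' := [set g | (g \notin [set e; f]) && (bend g \in B')].

Lemma hall_A' : hall_condition (edge_rel edges_to_B' aend bend) A'.
Proof.
move=> S sS; rewrite leqNgt; apply/negP.
set T := nbhd _ S => deficient; set Y := T :|: Pb.
have sTB' : T \subset B'.
  apply/subsetP => b; rewrite inE => /existsP[a /andP[_ /existsP[g /andP[]]]].
  by rewrite inE => /andP[_ bB'] /andP[_ /eqP <-].
have /subsetDP[sTB dTPb] := sTB'.
have sYB : Y \subset B.
  by rewrite subUset sTB; apply/subsetP => v; rewrite !inE => /orP[] /eqP->.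
have cardY : #|Y| = #|T| + 2.
  rewrite cardsU (disjoint_setI0 dTPb) cards0 subn0 cards2.
  by have := no_loop f; rewrite /is_loop => ->.
have SY g : g \notin [set e; f] -> aend g \in S -> bend g \in Y.
  move=> gef aS; rewrite in_setU.
  case: (boolP (bend g \in Pb)) => [_|nPb]; rewrite ?orbT //.
  apply/orP; left; rewrite inE; apply/existsP; exists (aend g); rewrite aS /=.
  apply/existsP; exists g; rewrite !eqxx inE gef andbT in_setD nPb inE.
  by case/andP: (c_aend_bend gef) => _ ->.
(* The 3|S| edges at S all end in Y, which receives 3|T| + 4 edges of
   G - {e, f}; the other 3(|T| - |S|) + 4 of these are the edges crossing
   S :|: Y, and since |T| < |S| there is exactly one. *)
apply: (@cut1_not_bridgeless _ _ ends (S :|: Y) _ bl).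
rewrite (crossing_cut sS (subsetUr _ _) sYB SY) -sum_nat_of_bool_cond.
have cover : \sum_(g | g \notin [set e; f]) (bend g \in Y) =
  \sum_(g | g \notin [set e; f]) (aend g \in S) +
  \sum_(g | g \notin [set e; f]) ((bend g \in Y) && (aend g \notin S)).
  rewrite -big_split; apply: eq_bigr => g gef.
  by case: (boolP (aend g \in S)) => [/(SY g gef)->|_] //=; rewrite andbT.
have := sum_aend_in_sub sS; have := sum_bend_in_sup (subsetUr _ _) sYB; rewrite -/Y; lia.
Qed.

Lemma matching_through_ef :
  exists2 M, perfect_matching ends M & [set e; f] \subset M.
Proof.
have disA'B' : [disjoint A' & B'].
  rewrite -setI_eq0; apply/eqP/setP => v; rewrite !inE.
  by case: (c v); rewrite ?andbF.
have tgtB' : {in edges_to_B', forall g, bend g \in B'}.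
  by move=> g; rewrite inE => /andP[].
have [N sNE pmN] := matching_of_hall (fun g v _ => incident_aend_bend g v)
  tgtB' disA'B' card_sides' hall_A'.
exists ([set e; f] :|: N); last exact: subsetUl.
move=> v; have -> : [set g in [set e; f] :|: N | incident ends g v] =
    [set g in [set e; f] | incident ends g v] :|: [set g in N | incident ends g v].
  by apply/setP => g; rewrite !inE andb_orl.
rewrite cardsU (_ : _ :&: _ = set0) ?cards0 ?subn0; last first.
  apply/setP => g; rewrite !inE; apply/negbTE/andP.
  case=> /andP[gef _] /andP[/(subsetP sNE)]; rewrite inE => /andP[].
  by rewrite !inE gef.
have cPa : v \in Pa -> c v by rewrite !inE => /orP[] /eqP->.
have cPb : v \in Pb -> ~~ c v by rewrite !inE => /orP[] /eqP->.
rewrite card_incident_ef (pmN v) (in_setU _ A') !in_setD.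
case: (boolP (v \in Pa)) => [/cPa cv|_]; case: (boolP (v \in Pb)) => [/cPb ncv|_];
  rewrite !inE.
- by rewrite cv in ncv.
- by rewrite cv.
- by rewrite (negbTE ncv).
- by case: (c v).
Qed.

Lemma matching_avoiding M : perfect_matching ends M -> [set e; f] \subset M ->
  exists2 N, perfect_matching ends N & N \subset ~: M.
Proof.
move=> pmM efM.
have offM g : g \notin M -> g \notin [set e; f] by apply: contra => /(subsetP efM).
have deg2 v : #|[set g in ~: M | incident ends g v]| = 2.
  exact: (card_incident_compl cub no_loop v pmM).
have disAB : [disjoint A & B].
  by rewrite -setI_eq0; apply/eqP/setP => v; rewrite !inE andbN.
have tgtB : {in ~: M, forall g, bend g \in B}.
  by move=> g; rewrite !inE => /offM /c_aend_bend /andP[_ cb].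
have hallA : hall_condition (edge_rel (~: M) aend bend) A.
  apply: (regular_hall_condition (k := 2)) => // [a|b].
    rewrite inE => ca; rewrite -(deg2 a); apply/subset_leq_card/subsetP => g.
    rewrite !inE incident_aend_bend => /andP[gM]; rewrite gM; case/orP=> // /eqP ba.
    by have /andP[_] := c_aend_bend (offM g gM); rewrite ba ca.
  rewrite -(deg2 b); apply/subset_leq_card/subsetP => g.
  by rewrite !inE incident_aend_bend => /andP[-> ->]; rewrite orbT.
have [N sNM pmN] := matching_of_hall (fun g v _ => incident_aend_bend g v)
  tgtB disAB card_sides hallA.
by exists N => // v; rewrite pmN !inE orbN.
Qed.

Lemma colourable_oriented : three_edge_colourable ends.
Proof.
have [M pmM efM] := matching_through_ef.
have [N pmN sNM] := matching_avoiding pmM efM.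
exact: (colourable_of_matchings cub no_loop pmM pmN sNM).
Qed.

End Oriented.
End TwoColouring.

Theorem theorem4p4 (V E : finType) (ends : E -> V * V) :
  cubic ends -> almost_bipartite ends -> three_edge_colourable ends.
Proof.
move=> cub [bl nbip [e [f [nef [c bip]]]]].
case/orP: (monochromatic_ef cub nef bip nbip) => /and4P[ce1 ce2 cf1 cf2].
  exact: (colourable_oriented cub nef bip bl ce1 ce2 cf1 cf2).
have bipN g : g \notin [set e; f] -> ~~ c (ends g).1 != ~~ c (ends g).2.
  by move/bip; case: (c _); case: (c _).
by apply: (colourable_oriented (c := fun v => ~~ c v) cub nef bipN bl); rewrite ?negbK.
Qed.
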